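(* Let $\widehat\rho:\mathrm{U}(1)\times\mathrm{SU}(2)\to\mathrm{U}(2)$, $(z,A)\mapsto zA$ (a double cover with kernel $\{(1,I_2),(-1,-I_2)\}$). For every group automorphism $\tau$ of $\mathrm{U}(2)$ there is a unique automorphism $\widetilde\tau$ of $\mathrm{U}(1)\times\mathrm{SU}(2)$ such that $\widehat\rho\circ\widetilde\tau=\tau\circ\widehat\rho$.
   Context: $\mathrm{U}(1)=\{z\in\mathbb C\mid |z|=1\}$, identified with the scalar matrices $zI_2$ in $\mathrm{U}(2)$; automorphisms are abstract group automorphisms. *)

(* genuine complex numbers are needed, since abstract group
   automorphisms of U(2) depend on the field Cx itself (not algC). *)
From Stdlib Require Import Reals.
Open Scope R_scope.

Record Cx := mkC { Re : R; Im : R }.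

Definition C0 : Cx := mkC 0 0.
Definition C1 : Cx := mkC 1 0.
Definition Copp (z : Cx) : Cx := mkC (- Re z) (- Im z).
Definition Cadd (z w : Cx) : Cx := mkC (Re z + Re w) (Im z + Im w).
Definition Cmul (z w : Cx) : Cx :=
  mkC (Re z * Re w - Im z * Im w) (Re z * Im w + Im z * Re w).
Definition Cconj (z : Cx) : Cx := mkC (Re z) (- Im z).
Definition Cnorm2 (z : Cx) : R := Re z * Re z + Im z * Im z.

Record M2 := mkM { m11 : Cx; m12 : Cx; m21 : Cx; m22 : Cx }.

Definition Mmul (A B : M2) : M2 :=
  mkM (Cadd (Cmul (m11 A) (m11 B)) (Cmul (m12 A) (m21 B)))
      (Cadd (Cmul (m11 A) (m12 B)) (Cmul (m12 A) (m22 B)))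
      (Cadd (Cmul (m21 A) (m11 B)) (Cmul (m22 A) (m21 B)))
      (Cadd (Cmul (m21 A) (m12 B)) (Cmul (m22 A) (m22 B))).
Definition Mid : M2 := mkM C1 C0 C0 C1.
Definition Madj (A : M2) : M2 :=
  mkM (Cconj (m11 A)) (Cconj (m21 A)) (Cconj (m12 A)) (Cconj (m22 A)).
Definition Mdet (A : M2) : Cx :=
  Cadd (Cmul (m11 A) (m22 A)) (Copp (Cmul (m12 A) (m21 A))).
Definition Mscale (z : Cx) (A : M2) : M2 :=
  mkM (Cmul z (m11 A)) (Cmul z (m12 A)) (Cmul z (m21 A)) (Cmul z (m22 A)).

Definition inU1 (z : Cx) : Prop := Cnorm2 z = 1.
Definition inU2 (A : M2) : Prop := Mmul (Madj A) A = Mid.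
Definition inSU2 (A : M2) : Prop := inU2 A /\ Mdet A = C1.

Definition inU1SU2 (p : Cx * M2) : Prop := inU1 (fst p) /\ inSU2 (snd p).
Definition prodMul (p q : Cx * M2) : Cx * M2 :=
  (Cmul (fst p) (fst q), Mmul (snd p) (snd q)).

Definition rhohat (p : Cx * M2) : M2 := Mscale (fst p) (snd p).

Definition is_group_aut {T : Type} (P : T -> Prop) (mul : T -> T -> T)
  (f : T -> T) : Prop :=
  (forall x, P x -> P (f x)) /\
  (forall x y, P x -> P y -> f (mul x y) = mul (f x) (f y)) /\
  (forall x y, P x -> P y -> f x = f y -> x = y) /\
  (forall y, P y -> exists x, P x /\ f x = y).

From Pilot Require Import Defs.
From Stdlib Require Import Reals Nsatz Lra.
Open Scope R_scope.

(* An automorphism [tau] of U(2) preserves the centre, the scalars [z I] with [z] in U(1), and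
   it preserves SU(2), since inside U(2) this is exactly the set of products of two
   commutators: [diag(p, p^* )] is the commutator of [diag(p, 1)] with the swap matrix, and
   every element of SU(2) is such a diagonal matrix times a unitary conjugate of another one.
   Hence [(z, A) |-> (tau(z I), tau A)] lifts [tau].  The lift is unique because every element
   of U(1) x SU(2) is a square, and squaring is constant on the fibres [{q, -q}] of [rhohat]. *)

Lemma Cx_ext (z w : Cx) : Re z = Re w -> Im z = Im w -> z = w.
Proof. destruct z, w; simpl; intros; subst; reflexivity. Qed.

Lemma M2_ext (A B : M2) :
  m11 A = m11 B -> m12 A = m12 B -> m21 A = m21 B -> m22 A = m22 B -> A = B.
Proof. destruct A, B; simpl; intros; subst; reflexivity. Qed.

Ltac destruct_M2 A :=
  let a := fresh "a" in let b := fresh "b" in let c := fresh "c" in let d := fresh "d" in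
  let a' := fresh "a" in let b' := fresh "b" in let c' := fresh "c" in let d' := fresh "d" in
  destruct A as [[a a'] [b b'] [c c'] [d d']].

Ltac entrywise := repeat (apply M2_ext || apply Cx_ext); simpl.

Lemma Mmul_assoc A B C : Mmul A (Mmul B C) = Mmul (Mmul A B) C.
Proof. destruct_M2 A; destruct_M2 B; destruct_M2 C; entrywise; ring. Qed.
Lemma Mmul_1_l A : Mmul Mid A = A.
Proof. destruct_M2 A; entrywise; ring. Qed.
Lemma Mmul_1_r A : Mmul A Mid = A.
Proof. destruct_M2 A; entrywise; ring. Qed.
Lemma Madj_mul A B : Madj (Mmul A B) = Mmul (Madj B) (Madj A).
Proof. destruct_M2 A; destruct_M2 B; entrywise; ring. Qed.
Lemma Madj_involutive A : Madj (Madj A) = A.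
Proof. destruct_M2 A; entrywise; ring. Qed.
Lemma Madj_1 : Madj Mid = Mid.
Proof. entrywise; ring. Qed.
Lemma Mdet_mul A B : Mdet (Mmul A B) = Cmul (Mdet A) (Mdet B).
Proof. destruct_M2 A; destruct_M2 B; entrywise; ring. Qed.
Lemma Mdet_adj A : Mdet (Madj A) = Cconj (Mdet A).
Proof. destruct_M2 A; entrywise; ring. Qed.
Lemma Mdet_1 : Mdet Mid = Defs.C1.
Proof. entrywise; ring. Qed.
Lemma Mmul_scale_r z A B : Mmul A (Mscale z B) = Mscale z (Mmul A B).
Proof. destruct_M2 A; destruct_M2 B; entrywise; ring. Qed.
Lemma Mscale_scale z w A : Mscale z (Mscale w A) = Mscale (Cmul z w) A.
Proof. destruct_M2 A; entrywise; ring. Qed.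
Lemma Mscale_1 A : Mscale Defs.C1 A = A.
Proof. destruct_M2 A; entrywise; ring. Qed.
Lemma Mdet_scale z A : Mdet (Mscale z A) = Cmul (Cmul z z) (Mdet A).
Proof. destruct z; destruct_M2 A; entrywise; ring. Qed.
Lemma Mscale_mul_scale z A : Mmul (Mscale z A) (Mscale z A) = Mscale (Cmul z z) (Mmul A A).
Proof. destruct z; destruct_M2 A; entrywise; ring. Qed.

Definition Madjugate (A : M2) : M2 :=
  mkM (m22 A) (Copp (m12 A)) (Copp (m21 A)) (m11 A).

Lemma Mmul_adjugate A : Mmul A (Madjugate A) = Mscale (Mdet A) Mid.
Proof. destruct_M2 A; entrywise; ring. Qed.

(* From [N M = I]: [adjugate M = det M . N] and [M . adjugate M = det M . I]. *)
Lemma Mmul_inv_sym M N : Mmul N M = Mid -> Mmul M N = Mid.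
Proof.
  intro NM.
  assert (adj_M : Madjugate M = Mscale (Mdet M) N).
  { rewrite <- (Mmul_1_l (Madjugate M)), <- NM, <- Mmul_assoc, Mmul_adjugate,
      Mmul_scale_r, Mmul_1_r. reflexivity. }
  assert (det_NM : Cmul (Mdet N) (Mdet M) = Defs.C1).
  { rewrite <- Mdet_mul, NM. apply Mdet_1. }
  rewrite <- (Mscale_1 (Mmul M N)), <- det_NM, <- Mscale_scale, <- Mmul_scale_r,
    <- adj_M, Mmul_adjugate, Mscale_scale, det_NM, Mscale_1.
  reflexivity.
Qed.

Lemma U2_mul_adj A : inU2 A -> Mmul A (Madj A) = Mid.
Proof. apply Mmul_inv_sym. Qed.
Lemma U2_mul A B : inU2 A -> inU2 B -> inU2 (Mmul A B).
Proof.
  unfold inU2; intros HA HB.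
  rewrite Madj_mul, <- Mmul_assoc, (Mmul_assoc (Madj A)), HA, Mmul_1_l; exact HB.
Qed.
Lemma U2_adj A : inU2 A -> inU2 (Madj A).
Proof. intro HA; unfold inU2; rewrite Madj_involutive; apply U2_mul_adj, HA. Qed.
Lemma U2_1 : inU2 Mid.
Proof. unfold inU2; rewrite Madj_1; apply Mmul_1_l. Qed.
#[local] Hint Resolve U2_mul U2_adj U2_1 : u2.

Lemma Cnorm_Mdet_U2 X : inU2 X -> Cmul (Cconj (Mdet X)) (Mdet X) = Defs.C1.
Proof. intro HX; rewrite <- Mdet_adj, <- Mdet_mul, HX; apply Mdet_1. Qed.

Definition comm (X Y : M2) : M2 := Mmul (Mmul X Y) (Mmul (Madj X) (Madj Y)).
Definition conjm (C X : M2) : M2 := Mmul (Mmul C X) (Madj C).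

Lemma U2_comm X Y : inU2 X -> inU2 Y -> inU2 (comm X Y).
Proof. unfold comm; auto with u2. Qed.
Lemma U2_conjm C X : inU2 C -> inU2 X -> inU2 (conjm C X).
Proof. unfold conjm; auto with u2. Qed.
#[local] Hint Resolve U2_comm U2_conjm : u2.

Section Homomorphism.
Variable f : M2 -> M2.
Hypothesis f_U2 : forall X, inU2 X -> inU2 (f X).
Hypothesis f_mul : forall X Y, inU2 X -> inU2 Y -> f (Mmul X Y) = Mmul (f X) (f Y).

Lemma hom_1 : f Mid = Mid.
Proof.
  assert (ff : Mmul (f Mid) (f Mid) = f Mid) by (rewrite <- f_mul, Mmul_1_l; auto with u2).
  assert (unit : Mmul (f Mid) (Madj (f Mid)) = Mid) by auto using U2_mul_adj with u2.
  rewrite <- unit at 2; rewrite <- ff at 2.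
  rewrite <- Mmul_assoc, unit, Mmul_1_r; reflexivity.
Qed.

Lemma hom_adj X : inU2 X -> f (Madj X) = Madj (f X).
Proof.
  intro HX.
  assert (inv : Mmul (f (Madj X)) (f X) = Mid) by (rewrite <- f_mul, HX; auto using hom_1 with u2).
  rewrite <- (Mmul_1_r (f (Madj X))), <- (U2_mul_adj (f X)), Mmul_assoc, inv, Mmul_1_l
    by auto.
  reflexivity.
Qed.

Lemma hom_comm X Y : inU2 X -> inU2 Y -> f (comm X Y) = comm (f X) (f Y).
Proof. intros; unfold comm; rewrite !f_mul, !hom_adj; auto with u2. Qed.

End Homomorphism.

Lemma conjm_mul C X Y : inU2 C -> conjm C (Mmul X Y) = Mmul (conjm C X) (conjm C Y).
Proof.
  intro HC; unfold conjm.
  rewrite !Mmul_assoc, <- (Mmul_assoc _ (Madj C) C), HC, Mmul_1_r; reflexivity.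
Qed.

Lemma conjm_comm C X Y : inU2 C -> inU2 X -> inU2 Y ->
  conjm C (comm X Y) = comm (conjm C X) (conjm C Y).
Proof. intros HC; apply hom_comm; auto using conjm_mul with u2. Qed.

Lemma conjm_conjm C D X : conjm C (conjm D X) = conjm (Mmul C D) X.
Proof. unfold conjm; rewrite Madj_mul, !Mmul_assoc; reflexivity. Qed.

Definition diag (z w : Cx) : M2 := mkM z C0 C0 w.
Definition Mswap : M2 := mkM C0 Defs.C1 Defs.C1 C0.
Definition Mrot (r s : R) : M2 := mkM (mkC r 0) (mkC s 0) (mkC (- s) 0) (mkC r 0).

Lemma U2_diag z w : inU1 z -> inU1 w -> inU2 (diag z w).
Proof. destruct z, w; unfold inU1, Cnorm2, inU2; simpl; intros; entrywise; nsatz. Qed.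
Lemma U2_swap : inU2 Mswap.
Proof. unfold inU2; entrywise; ring. Qed.
#[local] Hint Resolve U2_swap : u2.

Lemma comm_diag_swap z : comm (diag z Defs.C1) Mswap = diag z (Cconj z).
Proof. destruct z; unfold comm, diag, Mswap; entrywise; ring. Qed.

(* A real rotation is diagonalised, with eigenvalues [r -/+ i s], by a fixed unitary. *)
Definition Mrot_eigenbasis (c : R) : M2 := mkM (mkC c 0) (mkC c 0) (mkC 0 (- c)) (mkC 0 c).

Lemma U2_rot_eigenbasis c : 2 * c * c = 1 -> inU2 (Mrot_eigenbasis c).
Proof. intros; unfold inU2; entrywise; nsatz. Qed.

Lemma Mrot_diag c r s : 2 * c * c = 1 ->
  conjm (Mrot_eigenbasis c) (diag (mkC r (- s)) (mkC r s)) = Mrot r s.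
Proof. intros; unfold conjm, diag; entrywise; nsatz. Qed.

Lemma sqrt2_inv : exists c, 2 * c * c = 1.
Proof.
  exists (/ sqrt 2).
  assert (H : sqrt 2 * sqrt 2 = 2) by (apply sqrt_sqrt; lra).
  assert (sqrt 2 <> 0) by (intro E; rewrite E in H; lra).
  rewrite <- H at 1; field; auto.
Qed.

Lemma polar_decomposition x y :
  exists r z, inU1 z /\ x = r * Re z /\ y = r * Im z /\ r * r = x * x + y * y.
Proof.
  set (r := sqrt (x * x + y * y)).
  assert (Hr : r * r = x * x + y * y) by (apply sqrt_sqrt; nra).
  destruct (Req_dec r 0) as [r0 | r0].
  - exists r, Defs.C1; rewrite r0 in Hr |- *; unfold inU1, Cnorm2; simpl.
    repeat split; nra.
  - exists r, (mkC (x / r) (y / r)); unfold inU1, Cnorm2; simpl.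
    repeat split; try (field; auto); try exact Hr.
    replace (x / r * (x / r) + y / r * (y / r)) with ((x * x + y * y) / (r * r))
      by (field; auto).
    rewrite <- Hr; field; auto.
Qed.

Lemma SU2_adj_adjugate A : inSU2 A -> Madj A = Madjugate A.
Proof.
  intros [HU HD].
  assert (E : Mmul A (Madjugate A) = Mid) by (rewrite Mmul_adjugate, HD, Mscale_1; reflexivity).
  rewrite <- (Mmul_1_r (Madj A)), <- E, Mmul_assoc, HU, Mmul_1_l; reflexivity.
Qed.

Lemma SU2_form A : inSU2 A -> exists x y u v, x * x + y * y + u * u + v * v = 1 /\
  A = mkM (mkC x y) (mkC u v) (mkC (- u) v) (mkC x (- y)).
Proof.
  intro HA; assert (E := SU2_adj_adjugate A HA); destruct HA as [HU _].
  destruct_M2 A; unfold inU2 in HU; unfold Madj, Madjugate, Cconj, Copp in E; simpl in *.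
  injection E; injection HU; intros.
  exists a, a0, b, b0; split.
  - nsatz.
  - entrywise; lra.
Qed.

(* With [a = r p] and [b = s e] in polar form, [A = diag(p, p^* ) . [[r, s g^* ], [-s g, r]]]
   for [g = p e^*], and the second factor is a conjugate of the rotation [Mrot r s]. *)
Lemma SU2_factor A : inSU2 A -> exists p z V, inU1 p /\ inU1 z /\ inU2 V /\
  A = Mmul (diag p (Cconj p)) (conjm V (diag z (Cconj z))).
Proof.
  intro HA; destruct (SU2_form A HA) as (a1 & a2 & b1 & b2 & Hn & ->).
  destruct (polar_decomposition a1 a2) as (r & [p1 p2] & Hp & -> & -> & Hr).
  destruct (polar_decomposition b1 b2) as (s & [e1 e2] & He & -> & -> & Hs).
  destruct sqrt2_inv as [c Hc].
  unfold inU1, Cnorm2 in Hp, He; simpl in *.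
  set (g := mkC (p1 * e1 + p2 * e2) (p2 * e1 - p1 * e2)).
  assert (Hg : inU1 g) by (unfold inU1, Cnorm2; simpl; nsatz).
  exists (mkC p1 p2), (mkC r (- s)), (Mmul (diag Defs.C1 g) (Mrot_eigenbasis c)).
  assert (Hrs : r * r + s * s = 1) by nsatz.
  repeat split; auto using U2_rot_eigenbasis with u2.
  - unfold inU1, Cnorm2; simpl; nra.
  - apply U2_mul; auto using U2_rot_eigenbasis.
    apply U2_diag; auto; unfold inU1, Cnorm2; simpl; ring.
  - rewrite <- conjm_conjm.
    replace (Cconj (mkC r (- s))) with (mkC r s) by (apply Cx_ext; simpl; ring).
    rewrite Mrot_diag by auto.
    unfold conjm, diag, Mrot, g; entrywise; nsatz.
Qed.

Definition is_comm2 (A : M2) : Prop := exists X1 Y1 X2 Y2,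
  inU2 X1 /\ inU2 Y1 /\ inU2 X2 /\ inU2 Y2 /\ A = Mmul (comm X1 Y1) (comm X2 Y2).

Lemma SU2_is_comm2 A : inSU2 A -> is_comm2 A.
Proof.
  intro HA; destruct (SU2_factor A HA) as (p & z & V & Hp & Hz & HV & ->).
  assert (U1_1 : inU1 Defs.C1) by (unfold inU1, Cnorm2; simpl; ring).
  exists (diag p Defs.C1), Mswap, (conjm V (diag z Defs.C1)), (conjm V Mswap).
  repeat split; auto using U2_diag with u2.
  rewrite <- conjm_comm, !comm_diag_swap; auto using U2_diag with u2.
Qed.

Lemma Mdet_comm X Y : inU2 X -> inU2 Y -> Mdet (comm X Y) = Defs.C1.
Proof.
  intros HX HY; unfold comm; rewrite !Mdet_mul, !Mdet_adj.
  generalize (Cnorm_Mdet_U2 X HX) (Cnorm_Mdet_U2 Y HY).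
  destruct (Mdet X) as [a b], (Mdet Y) as [c d]; simpl; intros Hx Hy.
  injection Hx; injection Hy; intros; entrywise; nsatz.
Qed.

Lemma is_comm2_SU2 A : is_comm2 A -> inSU2 A.
Proof.
  intros (X1 & Y1 & X2 & Y2 & H1 & H2 & H3 & H4 & ->); split; auto with u2.
  rewrite Mdet_mul, !Mdet_comm by auto; entrywise; ring.
Qed.

Lemma hom_is_comm2 f : (forall X, inU2 X -> inU2 (f X)) ->
  (forall X Y, inU2 X -> inU2 Y -> f (Mmul X Y) = Mmul (f X) (f Y)) ->
  forall A, is_comm2 A -> is_comm2 (f A).
Proof.
  intros f_U2 f_mul A (X1 & Y1 & X2 & Y2 & H1 & H2 & H3 & H4 & ->).
  exists (f X1), (f Y1), (f X2), (f Y2); repeat split; auto.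
  rewrite f_mul, !(hom_comm f) by auto with u2; reflexivity.
Qed.

Definition Mscalar (z : Cx) : M2 := Mscale z Mid.

Lemma Mscale_scalar z A : Mscale z A = Mmul (Mscalar z) A.
Proof. destruct z; destruct_M2 A; unfold Mscalar; entrywise; ring. Qed.
Lemma Mscalar_mul z w : Mmul (Mscalar z) (Mscalar w) = Mscalar (Cmul z w).
Proof. destruct z, w; unfold Mscalar; entrywise; ring. Qed.
Lemma m11_scalar z : m11 (Mscalar z) = z.
Proof. destruct z; entrywise; ring. Qed.
Lemma Mscalar_inj z w : Mscalar z = Mscalar w -> z = w.
Proof. intro E; rewrite <- (m11_scalar z), <- (m11_scalar w), E; reflexivity. Qed.
Lemma U2_scalar z : inU2 (Mscalar z) <-> inU1 z.
Proof.
  destruct z; unfold inU1, Cnorm2, inU2, Mscalar; simpl; split.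
  - intro H; injection H; intros; nsatz.
  - intro; entrywise; nsatz.
Qed.

Definition central (X : M2) : Prop := forall Y, inU2 Y -> Mmul X Y = Mmul Y X.

Lemma central_scalar z : central (Mscalar z).
Proof. intros Y _; destruct z; destruct_M2 Y; unfold Mscalar; entrywise; ring. Qed.

(* Commuting with [diag(1, -1)] forces [X] diagonal, commuting with [Mswap] then makes it scalar. *)
Lemma central_eq_scalar X : central X -> X = Mscalar (m11 X).
Proof.
  intro cX.
  assert (U1_1 : inU1 Defs.C1) by (unfold inU1, Cnorm2; simpl; ring).
  assert (U1_m1 : inU1 (mkC (-1) 0)) by (unfold inU1, Cnorm2; simpl; ring).
  generalize (cX _ (U2_diag _ _ U1_1 U1_m1)) (cX _ U2_swap).
  destruct_M2 X; unfold diag, Mswap, Mscalar; simpl; intros H1 H2.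
  injection H1; injection H2; intros; entrywise; lra.
Qed.

(* [tau (z I)] is again scalar (lemma [aut_scalar]); its scalar is read off the (1,1) entry. *)
Definition lift (tau : M2 -> M2) (p : Cx * M2) : Cx * M2 :=
  (m11 (tau (Mscalar (fst p))), tau (snd p)).

Section Automorphism.
Variable tau : M2 -> M2.
Hypothesis tau_U2 : forall X, inU2 X -> inU2 (tau X).
Hypothesis tau_mul : forall X Y, inU2 X -> inU2 Y -> tau (Mmul X Y) = Mmul (tau X) (tau Y).
Hypothesis tau_inj : forall X Y, inU2 X -> inU2 Y -> tau X = tau Y -> X = Y.
Hypothesis tau_surj : forall Y, inU2 Y -> exists X, inU2 X /\ tau X = Y.

Lemma aut_central X : inU2 X -> central X -> central (tau X).
Proof.
  intros HX cX Y HY; destruct (tau_surj Y HY) as (Z & HZ & <-).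
  rewrite <- !tau_mul, cX by auto; reflexivity.
Qed.

Lemma aut_central_pre X : inU2 X -> central (tau X) -> central X.
Proof.
  intros HX cX Y HY; apply tau_inj; auto with u2.
  rewrite !tau_mul, cX by auto; reflexivity.
Qed.

Lemma aut_scalar z : inU1 z -> tau (Mscalar z) = Mscalar (m11 (tau (Mscalar z))).
Proof.
  intro Hz; apply central_eq_scalar, aut_central; [apply U2_scalar, Hz | apply central_scalar].
Qed.

Lemma aut_SU2 A : inSU2 A -> inSU2 (tau A).
Proof. intro HA; apply is_comm2_SU2, (hom_is_comm2 tau); auto using SU2_is_comm2. Qed.

Lemma aut_SU2_pre A : inU2 A -> inSU2 (tau A) -> inSU2 A.
Proof.
  intros HA H; apply is_comm2_SU2.
  destruct (SU2_is_comm2 _ H) as (X1 & Y1 & X2 & Y2 & H1 & H2 & H3 & H4 & E).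
  destruct (tau_surj _ H1) as (Z1 & K1 & <-), (tau_surj _ H2) as (W1 & L1 & <-),
    (tau_surj _ H3) as (Z2 & K2 & <-), (tau_surj _ H4) as (W2 & L2 & <-).
  exists Z1, W1, Z2, W2; repeat split; auto.
  apply tau_inj; auto with u2.
  rewrite E, tau_mul, !(hom_comm tau) by auto with u2; reflexivity.
Qed.

Lemma rhohat_lift p : inU1SU2 p -> rhohat (lift tau p) = tau (rhohat p).
Proof.
  destruct p as [z A]; intros [Hz HA]; unfold lift, rhohat; simpl.
  rewrite (Mscale_scalar z), (Mscale_scalar (m11 _)), tau_mul, <- aut_scalar;
    auto; [apply U2_scalar, Hz | apply HA].
Qed.

Lemma lift_is_aut : is_group_aut inU1SU2 prodMul (lift tau).
Proof.
  assert (tau_scalar : forall z, inU1 z -> inU1 (m11 (tau (Mscalar z)))).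
  { intros z Hz; apply U2_scalar; rewrite <- aut_scalar by auto; apply tau_U2, U2_scalar, Hz. }
  split; [| split; [| split]].
  - intros [z A] [Hz HA]; split; simpl; auto using aut_SU2.
  - intros [z A] [w B] [Hz [HA _]] [Hw [HB _]]; unfold lift, prodMul; simpl.
    apply U2_scalar in Hz, Hw.
    rewrite <- Mscalar_mul, !tau_mul, (aut_scalar z), (aut_scalar w), Mscalar_mul, !m11_scalar
      by (auto; apply U2_scalar; auto).
    reflexivity.
  - intros [z A] [w B] [Hz HA] [Hw HB]; unfold lift; simpl; intro E; injection E as Ez EA.
    rewrite (tau_inj A B) by (apply HA || apply HB || exact EA).
    rewrite (Mscalar_inj z w); auto.
    apply tau_inj; try apply U2_scalar; auto.
    rewrite aut_scalar, (aut_scalar w), Ez; auto.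
  - intros [w B] [Hw HB].
    destruct (tau_surj (Mscalar w)) as (X & HX & EX); [apply U2_scalar, Hw |].
    assert (X_scalar : X = Mscalar (m11 X)).
    { apply central_eq_scalar, aut_central_pre; rewrite ?EX; auto using central_scalar. }
    destruct (tau_surj B (proj1 HB)) as (A & HA & EA).
    exists (m11 X, A); split; [split |]; simpl.
    + apply U2_scalar; rewrite <- X_scalar; exact HX.
    + apply aut_SU2_pre; rewrite ?EA; auto.
    + unfold lift; simpl; rewrite <- X_scalar, EX, m11_scalar, EA; reflexivity.
Qed.

End Automorphism.

(* For [z = x + i y] on the unit circle with [x <> -1], the square root is [(1 + z) / |1 + z|],
   and [|1 + z|^2 = 2 + 2 x]. *)
Lemma half_angle_norm x : -1 < x -> exists k n, k * n = 1 /\ n * n = 2 + 2 * x.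
Proof.
  intro Hx; set (n := sqrt (2 + 2 * x)).
  assert (Hn : n * n = 2 + 2 * x) by (apply sqrt_sqrt; lra).
  assert (n <> 0) by (intro E; rewrite E in Hn; lra).
  exists (/ n), n; split; auto; field; auto.
Qed.

Lemma U1_square z : inU1 z -> exists w, inU1 w /\ Cmul w w = z.
Proof.
  destruct z as [x y]; unfold inU1, Cnorm2; simpl; intro Hz.
  destruct (Req_dec x (-1)) as [E | E].
  - exists (mkC 0 1); assert (y = 0) by nra; subst.
    unfold inU1, Cnorm2; split; simpl; [ring | entrywise; ring].
  - destruct (half_angle_norm x) as (k & n & Hk & Hn); [nra |].
    exists (mkC ((1 + x) * k) (y * k)); clear E.
    unfold inU1, Cnorm2; split; simpl; [| entrywise]; nsatz.
Qed.

Lemma SU2_square A : inSU2 A -> exists B, inSU2 B /\ Mmul B B = A.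
Proof.
  intro HA; destruct (SU2_form A HA) as (x & y & u & v & Hn & ->).
  destruct (Req_dec x (-1)) as [E | E].
  - exists (diag (mkC 0 1) (mkC 0 (-1))).
    assert (y = 0) by nra; assert (u = 0) by nra; assert (v = 0) by nra; subst.
    unfold inSU2, inU2; repeat split; entrywise; ring.
  - destruct (half_angle_norm x) as (k & n & Hk & Hn'); [nra |].
    exists (mkM (mkC ((1 + x) * k) (y * k)) (mkC (u * k) (v * k))
                (mkC (- (u * k)) (v * k)) (mkC ((1 + x) * k) (- (y * k)))); clear E.
    unfold inSU2, inU2; repeat split; entrywise; nsatz.
Qed.

Lemma U1SU2_square p : inU1SU2 p -> exists q, inU1SU2 q /\ prodMul q q = p.
Proof.
  destruct p as [z A]; intros [Hz HA].
  destruct (U1_square z Hz) as (w & Hw & <-), (SU2_square A HA) as (B & HB & <-).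
  exists (w, B); split; [split |]; auto.
Qed.

(* The kernel of [rhohat] is [{(1, I), (-1, -I)}], so a fibre of [rhohat] is [{q, -q}]. *)
Lemma rhohat_eq_square p q : inU1SU2 p -> inU1SU2 q -> rhohat p = rhohat q ->
  prodMul p p = prodMul q q.
Proof.
  destruct p as [z A], q as [w B]; unfold inU1SU2, rhohat, prodMul; simpl.
  intros [Hz [_ HA]] [Hw [_ HB]] E.
  assert (Hzz : Cmul (Cconj z) z = Defs.C1)
    by (clear - Hz; destruct z; unfold inU1, Cnorm2 in Hz; simpl in *; entrywise; nsatz).
  set (c := Cmul (Cconj z) w).
  assert (EA : A = Mscale c B).
  { unfold c; rewrite <- Mscale_scale, <- E, Mscale_scale, Hzz, Mscale_1; reflexivity. }
  assert (Ecc : Cmul c c = Defs.C1).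
  { assert (D := f_equal Mdet EA); rewrite Mdet_scale, HA, HB in D.
    rewrite D; destruct (Cmul c c); entrywise; ring. }
  assert (Ew : w = Cmul z c).
  { unfold c; clear - Hzz; destruct z, w; simpl in *; injection Hzz; intros; entrywise; nsatz. }
  rewrite EA, Mscale_mul_scale, Ecc, Mscale_1, Ew.
  f_equal; destruct z, c; simpl in *; injection Ecc; intros; entrywise; nsatz.
Qed.

Lemma hom_eq_of_rhohat f g :
  (forall p, inU1SU2 p -> inU1SU2 (f p)) -> (forall p, inU1SU2 p -> inU1SU2 (g p)) ->
  (forall p q, inU1SU2 p -> inU1SU2 q -> f (prodMul p q) = prodMul (f p) (f q)) ->
  (forall p q, inU1SU2 p -> inU1SU2 q -> g (prodMul p q) = prodMul (g p) (g q)) ->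
  (forall p, inU1SU2 p -> rhohat (f p) = rhohat (g p)) ->
  forall p, inU1SU2 p -> f p = g p.
Proof.
  intros f_U g_U f_mul g_mul E p Hp.
  destruct (U1SU2_square p Hp) as (q & Hq & <-).
  rewrite f_mul, g_mul by auto; apply rhohat_eq_square; auto.
Qed.

Theorem mainTheorem13 (tau : M2 -> M2) :
  is_group_aut inU2 Mmul tau ->
  exists tt : Cx * M2 -> Cx * M2,
    is_group_aut inU1SU2 prodMul tt /\
    (forall p, inU1SU2 p -> rhohat (tt p) = tau (rhohat p)) /\
    (forall tt' : Cx * M2 -> Cx * M2,
       is_group_aut inU1SU2 prodMul tt' ->
       (forall p, inU1SU2 p -> rhohat (tt' p) = tau (rhohat p)) ->
       forall p, inU1SU2 p -> tt' p = tt p).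
Proof.
  intros (tau_U2 & tau_mul & tau_inj & tau_surj).
  assert (lift_aut := lift_is_aut tau tau_U2 tau_mul tau_inj tau_surj).
  assert (lift_rhohat := rhohat_lift tau tau_mul tau_surj).
  exists (lift tau); split; [exact lift_aut | split; [exact lift_rhohat |]].
  intros tt' (tt'_U & tt'_mul & _) tt'_rhohat.
  destruct lift_aut as (lift_U & lift_mul & _).
  apply hom_eq_of_rhohat; auto.
  intros p Hp; rewrite tt'_rhohat, lift_rhohat; auto.
Qed.
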